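(* Let $\lambda\in\mathbb N$ and let $X$ be a random variable over $\{0,1\}^\lambda$ with min-entropy $\mathbf H_{\min}(X)\ge h$. For any finite-dimensional Hilbert spaces $\mathcal H_B,\mathcal H_C$, any families of POVMs $\{\{B_\theta^x\}_{x\in\{0,1\}^\lambda}\}_{\theta\in\{0,1\}^\lambda}$ on $\mathcal H_B$ and $\{\{C_\theta^x\}_{x\in\{0,1\}^\lambda}\}_{\theta\in\{0,1\}^\lambda}$ on $\mathcal H_C$, and any CPTP map $\Phi:\mathcal D((\mathbb C^2)^{\otimes\lambda})\to\mathcal D(\mathcal H_B\otimes\mathcal H_C)$, $$\sum_{x\in\{0,1\}^\lambda}\Pr[X=x]\;\mathbb E_{\theta\leftarrow\{0,1\}^\lambda}\,\mathrm{Tr}\!\left[(B_\theta^x\otimes C_\theta^x)\,\Phi\big(|x^\theta\rangle\langle x^\theta|\big)\right]\;\le\;2^{-h}\left(1+\tfrac{1}{\sqrt2}\right)^{\lambda}.$$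
   Context: For $x,\theta\in\{0,1\}^\lambda$, $|x^\theta\rangle=H^{\theta}|x\rangle$ where $H^\theta=H^{\theta_1}\otimes\cdots\otimes H^{\theta_\lambda}$ and $H$ is the single-qubit Hadamard gate ($H^0=\mathds 1$). $\mathbb E_\theta$ denotes the expectation over uniform $\theta$. $\mathbf H_{\min}(X)=-\log_2\max_x\Pr[X=x]$. *)

From HB Require Import structures.
From mathcomp Require Import all_boot all_algebra.
From mathcomp Require Import reals exp.
From mathcomp Require Import complex mxtens.
Set Implicit Arguments.
Unset Strict Implicit.
Unset Printing Implicit Defensive.
Import GRing.Theory Num.Theory.
Local Open Scope ring_scope.

Definition bits (lam : nat) := {ffun 'I_lam -> bool}.

(* dimension of (C^2)^{⊗lam}; computational basis indexed by bit strings
   via enum_val / enum_rank (this number equals 2^lam). *)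
Definition qdim (lam : nat) : nat := #|{: bits lam}|.

Section Quantum.
Variable R : realType.
Local Notation C := R[i].

Definition adjmx m n (A : 'M[C]_(m, n)) : 'M[C]_(n, m) :=
  \matrix_(i, j) (A j i)^*.

Definition psdmx n (A : 'M[C]_n) : Prop :=
  forall v : 'cV[C]_n, 0 <= (adjmx v *m A *m v) 0 0.

Definition povm n (T : finType) (E : T -> 'M[C]_n) : Prop :=
  (forall t, psdmx (E t)) /\ \sum_(t : T) E t = 1%:M.

Definition linear_map n m (Phi : 'M[C]_n -> 'M[C]_m) : Prop :=
  forall (a : C) (A B : 'M[C]_n), Phi (a *: A + B) = a *: Phi A + Phi B.

(* (id_k ⊗ Phi) acting on operators on C^k ⊗ C^n (index convention of tensmx) *)
Definition ampl k n m (Phi : 'M[C]_n -> 'M[C]_m) (M : 'M[C]_(k * n)) : 'M[C]_(k * m) :=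
  \sum_(i < k) \sum_(j < k)
    (delta_mx i j *t Phi (\matrix_(a, b) M (mxtens_index (i, a)) (mxtens_index (j, b)))).

Definition completely_positive n m (Phi : 'M[C]_n -> 'M[C]_m) : Prop :=
  forall (k : nat) (M : 'M[C]_(k * n)), psdmx M -> psdmx (ampl Phi M).

Definition trace_preserving n m (Phi : 'M[C]_n -> 'M[C]_m) : Prop :=
  forall M : 'M[C]_n, \tr (Phi M) = \tr M.

Definition cptp n m (Phi : 'M[C]_n -> 'M[C]_m) : Prop :=
  [/\ linear_map Phi, completely_positive Phi & trace_preserving Phi].

(* single-qubit amplitude <b| H^t |a> *)
Definition had_amp (t a b : bool) : C :=
  if t then ((Num.sqrt (2 : R))^-1)%:C%C * (-1) ^+ (a && b)
  else (a == b)%:R.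

(* |x^theta> = H^theta |x>, as a column vector in (C^2)^{⊗lam} *)
Definition bb84_ket (lam : nat) (x theta : bits lam) : 'cV[C]_(qdim lam) :=
  \col_k \prod_(i < lam) had_amp (theta i) (x i) ((enum_val k : bits lam) i).

Definition bb84_proj (lam : nat) (x theta : bits lam) : 'M[C]_(qdim lam) :=
  bb84_ket x theta *m adjmx (bb84_ket x theta).

Definition is_distr (T : finType) (p : T -> R) : Prop :=
  (forall t, 0 <= p t) /\ \sum_(t : T) p t = 1.

Definition log2 (x : R) : R := ln x / ln 2.

Definition Hmin (T : finType) (p : T -> R) : R :=
  - log2 (\big[Num.max/0]_(t : T) p t).

End Quantum.

Arguments bb84_ket {R lam}.
Arguments bb84_proj {R lam}.

(* Write rho th x = |x^th><x^th|, let G th x, K th x be self-adjoint square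
   roots of Bob's and Charlie's measurement operators, J the Choi matrix of
   Phi and L its square root.  Through the Choi identity
   Tr((B ⊗ C) Phi(rho)) = Tr(J (rho^T ⊗ B ⊗ C)) each success probability is
   sum_j |(rho th x ⊗ G th x ⊗ K th x) L e_j|^2, so the total success summed
   over x and th equals sum_j sum_th |opBC th (L e_j)|^2 with
   opBC th = sum_x rho th x ⊗ G th x ⊗ K th x.  The core operator inequality
   sum_th |opBC th v|^2 <= (1 + 1/sqrt 2)^lam |v|^2 follows from the
   factorisation opBC th = opB th * opC th into contractions and from the
   overlap bound |<x^th|x'^th'>| <= kappa th th', combined by an AM-GM form of
   Cauchy-Schwarz.  As sum_j |L e_j|^2 = Tr J = 2^lam, the uniform average over
   th is at most (1 + 1/sqrt 2)^lam for the sum over x, and Pr[X = x] <= 2^-h. *)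

From HB Require Import structures.
From mathcomp Require Import all_boot all_algebra.
From mathcomp Require Import reals exp.
From mathcomp Require Import complex mxtens.
From mathcomp Require Import order ring.
Set Implicit Arguments.
Unset Strict Implicit.
Unset Printing Implicit Defensive.
Import Order.TTheory GRing.Theory Num.Theory.
Local Open Scope ring_scope.

Section Hermitian.
Variable R : realType.
Local Notation C := R[i].

Lemma adjmxE m n (A : 'M[C]_(m, n)) i j : adjmx A i j = (A j i)^*.
Proof. by rewrite mxE. Qed.

Lemma adjmxK m n (A : 'M[C]_(m, n)) : adjmx (adjmx A) = A.
Proof. by apply/matrixP=> i j; rewrite !mxE conjCK. Qed.

Lemma adjmx_mul m n p (A : 'M[C]_(m, n)) (B : 'M[C]_(n, p)) :
  adjmx (A *m B) = adjmx B *m adjmx A.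
Proof.
apply/matrixP=> i j; rewrite !mxE rmorph_sum; apply: eq_bigr => k _.
by rewrite !mxE rmorphM mulrC.
Qed.

Lemma adjmxD m n (A B : 'M[C]_(m, n)) : adjmx (A + B) = adjmx A + adjmx B.
Proof. by apply/matrixP=> i j; rewrite !mxE rmorphD. Qed.

Lemma adjmx_sum m n (I : finType) (F : I -> 'M[C]_(m, n)) :
  adjmx (\sum_i F i) = \sum_i adjmx (F i).
Proof.
apply/matrixP=> i j; rewrite !mxE summxE rmorph_sum summxE.
by apply: eq_bigr => k _; rewrite !mxE.
Qed.

Lemma adjmxZ m n (a : C) (A : 'M[C]_(m, n)) : adjmx (a *: A) = a^* *: adjmx A.
Proof. by apply/matrixP=> i j; rewrite !mxE rmorphM. Qed.

Lemma adjmx1 n : adjmx (1%:M : 'M[C]_n) = 1%:M.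
Proof. by apply/matrixP=> i j; rewrite !mxE conjC_nat eq_sym. Qed.

Lemma adjmx_tens m n p q (A : 'M[C]_(m, n)) (B : 'M[C]_(p, q)) :
  adjmx (A *t B) = adjmx A *t adjmx B.
Proof. by apply/matrixP=> i j; rewrite !mxE rmorphM. Qed.

Lemma tensmx11 m n : (1%:M : 'M[C]_m) *t (1%:M : 'M[C]_n) = 1%:M.
Proof.
apply/matrixP=> i j.
case: (mxtens_indexP i) => i1 i2; case: (mxtens_indexP j) => j1 j2.
rewrite tensmxE !mxE (inj_eq (can_inj (@mxtens_indexK m n))) xpair_eqE.
by case: (i1 == j1); case: (i2 == j2); rewrite /= ?mulr1 ?mulr0 ?mul0r.
Qed.

Lemma adjmx_tens_mul m n p q (A : 'M[C]_(m, n)) (B : 'M[C]_(p, q)) :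
  adjmx (A *t B) *m (A *t B) = (adjmx A *m A) *t (adjmx B *m B).
Proof. by rewrite adjmx_tens tensmx_mul. Qed.

Lemma tensmx_suml m n p q (I : finType) (F : I -> 'M[C]_(m, n)) (D : 'M[C]_(p, q)) :
  (\sum_i F i) *t D = \sum_i (F i *t D).
Proof.
apply/matrixP=> i j; rewrite !mxE !summxE mulr_suml.
by apply: eq_bigr => k _; rewrite !mxE.
Qed.

Lemma tensmx_sumr m n p q (I : finType) (A : 'M[C]_(m, n)) (F : I -> 'M[C]_(p, q)) :
  A *t (\sum_i F i) = \sum_i (A *t F i).
Proof.
apply/matrixP=> i j; rewrite !mxE !summxE mulr_sumr.
by apply: eq_bigr => k _; rewrite !mxE.
Qed.

Lemma tensmxZl m n p q (a : C) (A : 'M[C]_(m, n)) (D : 'M[C]_(p, q)) :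
  (a *: A) *t D = a *: (A *t D).
Proof. by apply/matrixP=> i j; rewrite !mxE mulrA. Qed.

Lemma mxtrace_tens m n (A : 'M[C]_m) (B : 'M[C]_n) :
  \tr (A *t B) = \tr A * \tr B.
Proof. by rewrite /mxtrace mulr_sum; apply: eq_bigr => k _; rewrite !mxE. Qed.

Definition dot n (u v : 'cV[C]_n) : C := (adjmx u *m v) 0 0.
Definition sqnorm n (u : 'cV[C]_n) : C := dot u u.

Lemma dotE n (u v : 'cV[C]_n) : dot u v = \sum_i (u i 0)^* * v i 0.
Proof. by rewrite /dot mxE; apply: eq_bigr => i _; rewrite mxE. Qed.

Lemma dotC n (u v : 'cV[C]_n) : dot v u = (dot u v)^*.
Proof.
rewrite !dotE rmorph_sum; apply: eq_bigr => i _.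
by rewrite rmorphM /= conjCK mulrC.
Qed.

Lemma sqnorm_ge0 n (u : 'cV[C]_n) : 0 <= sqnorm u.
Proof.
rewrite /sqnorm dotE; apply: sumr_ge0 => i _.
by rewrite -normCKC exprn_ge0.
Qed.

Lemma sqnorm_real n (u : 'cV[C]_n) : sqnorm u \is Num.real.
Proof. exact: ger0_real (sqnorm_ge0 u). Qed.

Lemma dot_adjl n m (A : 'M[C]_(m, n)) (u : 'cV[C]_m) (v : 'cV[C]_n) :
  dot u (A *m v) = dot (adjmx A *m u) v.
Proof. by rewrite /dot adjmx_mul adjmxK mulmxA. Qed.

Lemma sqnorm_adj n m (A : 'M[C]_(m, n)) (a : 'cV[C]_n) :
  sqnorm (A *m a) = dot a ((adjmx A *m A) *m a).
Proof. by rewrite /sqnorm -mulmxA [RHS]dot_adjl adjmxK. Qed.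

Lemma dotDr n (u v w : 'cV[C]_n) : dot u (v + w) = dot u v + dot u w.
Proof. by rewrite /dot mulmxDr mxE. Qed.

Lemma dotDl n (u v w : 'cV[C]_n) : dot (v + w) u = dot v u + dot w u.
Proof. by rewrite /dot adjmxD mulmxDl mxE. Qed.

Lemma dot_sumr n (I : finType) (u : 'cV[C]_n) (F : I -> 'cV[C]_n) :
  dot u (\sum_i F i) = \sum_i dot u (F i).
Proof. by rewrite /dot mulmx_sumr summxE. Qed.

Lemma dot_suml n (I : finType) (u : 'cV[C]_n) (F : I -> 'cV[C]_n) :
  dot (\sum_i F i) u = \sum_i dot (F i) u.
Proof. by rewrite /dot adjmx_sum mulmx_suml summxE. Qed.

Lemma dotZr n (a : C) (u v : 'cV[C]_n) : dot u (a *: v) = a * dot u v.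
Proof. by rewrite /dot -scalemxAr mxE. Qed.

Lemma dotZl n (a : C) (u v : 'cV[C]_n) : dot (a *: u) v = a^* * dot u v.
Proof. by rewrite /dot adjmxZ -scalemxAl mxE. Qed.

Lemma dotNr n (u v : 'cV[C]_n) : dot u (- v) = - dot u v.
Proof. by rewrite -scaleN1r dotZr mulN1r. Qed.

Lemma dotNl n (u v : 'cV[C]_n) : dot (- u) v = - dot u v.
Proof. by rewrite -scaleN1r dotZl rmorphN1 mulN1r. Qed.

Lemma dot_delta n (i : 'I_n) (w : 'cV[C]_n) : dot (delta_mx i 0) w = w i 0.
Proof.
rewrite dotE (bigD1 i) //= big1 ?addr0 => [|j ji]; rewrite mxE.
  by rewrite !eqxx conjC1 mul1r.
by rewrite (negPf ji) conjC0 mul0r.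
Qed.

Lemma adj_mul_vec n (u v : 'cV[C]_n) : adjmx u *m v = (dot u v)%:M.
Proof. by apply/matrixP=> p q; rewrite [p]ord1 [q]ord1 [RHS]mxE eqxx mulr1n. Qed.

Lemma outer_mul n (e f g h : 'cV[C]_n) :
  (e *m adjmx f) *m (g *m adjmx h) = dot f g *: (e *m adjmx h).
Proof.
by rewrite mulmxA -[e *m _ *m g]mulmxA adj_mul_vec mul_mx_scalar scalemxAl.
Qed.

Definition re2dot n (u v : 'cV[C]_n) : C := dot u v + (dot u v)^*.

Lemma re2dot_real n (u v : 'cV[C]_n) : re2dot u v \is Num.real.
Proof. by apply/CrealP; rewrite /re2dot rmorphD /= conjCK addrC. Qed.

Lemma sqnormD n (u v : 'cV[C]_n) : sqnorm (u + v) = sqnorm u + sqnorm v + re2dot u v.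
Proof. by rewrite /sqnorm /re2dot dotDl !dotDr (dotC u v); ring. Qed.

Lemma sqnormB n (u v : 'cV[C]_n) : sqnorm (u - v) = sqnorm u + sqnorm v - re2dot u v.
Proof.
by rewrite sqnormD /sqnorm dotNl dotNr opprK /re2dot dotNr rmorphN /=; ring.
Qed.

Lemma re2dot_le n (u v : 'cV[C]_n) : re2dot u v <= sqnorm u + sqnorm v.
Proof. by rewrite -subr_ge0 -sqnormB sqnorm_ge0. Qed.

(* |2 Re <u, v>| <= |u|^2 + |v|^2, from |u -+ v|^2 >= 0 *)
Lemma norm_re2dot_le n (u v : 'cV[C]_n) : `|re2dot u v| <= sqnorm u + sqnorm v.
Proof.
rewrite real_ler_norml ?re2dot_real // re2dot_le andbT.
by rewrite -subr_ge0 opprK addrC -sqnormD sqnorm_ge0.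
Qed.

Lemma re2dot_scaled n (s : C) (u v : 'cV[C]_n) : s \is Num.real ->
  s * re2dot u v <= s ^+ 2 * sqnorm u + sqnorm v.
Proof.
move=> /CrealP sr; have := re2dot_le (s *: u) v.
by rewrite /re2dot /sqnorm !dotZl dotZr sr rmorphM /= sr -mulrDr mulrA -expr2.
Qed.

Lemma dot_le_sqnorm n (w v : 'cV[C]_n) (c : C) :
  0 < c -> dot w v \is Num.real -> sqnorm w <= c * dot w v ->
  dot w v <= c * sqnorm v.
Proof.
move=> c_gt0 /CrealP qr hw; set q := dot w v in qr hw *.
have ic_r : c^-1 \is Num.real by apply: ger0_real; rewrite invr_ge0 ltW.
have hw' : c^-1 ^+ 2 * sqnorm w <= c^-1 * q.
  apply: le_trans (ler_wpM2l _ hw) _; first by rewrite exprn_ge0 // invr_ge0 ltW.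
  by rewrite expr2 -mulrA [c^-1 * (c * q)]mulrA mulVf ?gt_eqF // mul1r.
have := le_trans (re2dot_scaled w v ic_r) (lerD hw' (lexx (sqnorm v))).
by rewrite /re2dot -/q qr mulrDr lerD2l -ler_pdivrMl.
Qed.

Lemma sqnorm_sum n (I : finType) (u : I -> 'cV[C]_n) :
  2 * sqnorm (\sum_i u i) = \sum_i \sum_j re2dot (u i) (u j).
Proof.
have e1 : sqnorm (\sum_i u i) = \sum_i \sum_j dot (u i) (u j).
  by rewrite /sqnorm dot_suml; apply: eq_bigr => i _; rewrite dot_sumr.
have e2 := esym (conj_Creal (sqnorm_real (\sum_i u i))).
rewrite mulr_natl mulr2n {1}e1 e2 e1 rmorph_sum -big_split.
by apply: eq_bigr => i _; rewrite rmorph_sum -big_split.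
Qed.

Lemma sqnorm_sum_orth n (I : finType) (F : I -> 'M[C]_n) (a : 'cV[C]_n) :
  (forall i, adjmx (F i) = F i) ->
  (forall i j, i != j -> F i *m F j = 0) ->
  sqnorm ((\sum_i F i) *m a) = \sum_i sqnorm (F i *m a).
Proof.
move=> hF oF; rewrite /sqnorm mulmx_suml dot_suml.
apply: eq_bigr => i _; rewrite dot_sumr (bigD1 i) //= big1 ?addr0 //.
move=> j ji; rewrite -{1}(hF i) -dot_adjl mulmxA oF 1?eq_sym //.
by rewrite mul0mx /dot mulmx0 mxE.
Qed.

Lemma sqnorm_resolution m n (I J : finType) (F : I -> J -> 'M[C]_(m, n))
    (a : 'cV[C]_n) :
  \sum_i \sum_j adjmx (F i j) *m F i j = 1%:M ->
  sqnorm a = \sum_i \sum_j sqnorm (F i j *m a).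
Proof.
move=> F1; rewrite /sqnorm -[X in dot a X]mul1mx -F1 mulmx_suml dot_sumr.
apply: eq_bigr => i _; rewrite mulmx_suml dot_sumr.
by apply: eq_bigr => j _; rewrite -sqnorm_adj.
Qed.

Lemma le_diag_sum (I : finType) (F : I -> I -> C) :
  (forall x y, 0 <= F x y) -> \sum_x F x x <= \sum_x \sum_y F x y.
Proof.
move=> F0; apply: ler_sum => x _.
by rewrite (bigD1 x) //= lerDl; apply: sumr_ge0 => y _; exact: F0.
Qed.

Lemma diag_contraction n (I : finType) (F : I -> I -> 'M[C]_n) (a : 'cV[C]_n) :
  \sum_i \sum_j adjmx (F i j) *m F i j = 1%:M ->
  (forall i, adjmx (F i i) = F i i) ->
  (forall i j, i != j -> F i i *m F j j = 0) ->
  sqnorm ((\sum_i F i i) *m a) <= sqnorm a.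
Proof.
move=> F1 hF oF; rewrite sqnorm_sum_orth // (sqnorm_resolution a F1).
by apply: le_diag_sum => x y; apply: sqnorm_ge0.
Qed.

End Hermitian.

Section PositiveSquareRoot.
Variable R : realType.
Local Notation C := R[i].

Lemma psd_real n (A : 'M[C]_n) v : psdmx A -> dot v (A *m v) \is Num.real.
Proof. by move=> /(_ v) qf; apply: ger0_real; rewrite /dot mulmxA. Qed.

Lemma conj_of_real_parts (z w : C) :
  z + w \is Num.real -> 'i * (w - z) \is Num.real -> w = z^*.
Proof.
move=> /CrealP; rewrite rmorphD /= => e1 /CrealP; rewrite rmorphM rmorphB /= conjCi => e2.
have e2' : z^* - w^* = w - z.
  by apply: (mulfI (neq0Ci C)); rewrite -e2; ring.
have two_w : 2 * w = 2 * z^* :> C.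
  rewrite !mulr_natl !mulr2n.
  have -> : w + w = (z + w) + (w - z) by ring.
  by rewrite -e1 -e2'; ring.
by apply: (mulfI _ two_w); rewrite pnatr_eq0.
Qed.

(* polarization: a matrix with a real quadratic form is self-adjoint *)
Lemma psd_herm n (A : 'M[C]_n) : psdmx A -> adjmx A = A.
Proof.
move=> psdA.
have polar u v : dot v (A *m u) = (dot u (A *m v))^*.
  apply: conj_of_real_parts.
    have -> : dot u (A *m v) + dot v (A *m u) =
        dot (u + v) (A *m (u + v)) - dot u (A *m u) - dot v (A *m v).
      by rewrite mulmxDr !dotDl !dotDr; ring.
    by rewrite !rpredB ?psd_real.
  have -> : 'i * (dot v (A *m u) - dot u (A *m v)) =
      dot ('i *: u + v) (A *m ('i *: u + v)) - dot u (A *m u) - dot v (A *m v).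
    rewrite mulmxDr -scalemxAr !dotDl !dotDr !dotZl !dotZr conjCi.
    have ii : 'i * 'i = -1 :> C by rewrite -expr2 sqrCi.
    by rewrite !mulrA mulNr ii opprK mul1r; ring.
  by rewrite !rpredB ?psd_real.
apply/matrixP=> i j; rewrite mxE.
by have := polar (delta_mx j 0) (delta_mx i 0); rewrite !dot_delta -!colE !mxE => ->.
Qed.

Lemma adjmx_diag n (s : 'rV[C]_n) : (forall i, s 0 i \is Num.real) ->
  adjmx (diag_mx s) = diag_mx s.
Proof.
move=> sr; apply/matrixP=> i j; rewrite !mxE eq_sym.
by case: eqP => [->|_]; rewrite ?mulr1n ?mulr0n ?conjC0 // conj_Creal.
Qed.

Lemma unitary_diag_sqrt n (A U : 'M[C]_n) (d : 'rV[C]_n) :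
  U *m adjmx U = 1%:M -> A = adjmx U *m diag_mx d *m U -> psdmx A ->
  let S := adjmx U *m diag_mx (\row_i sqrtC (d 0 i)) *m U in
  adjmx S = S /\ S *m S = A.
Proof.
move=> UU eA psdA S; rewrite /S.
have d_ge0 i : 0 <= d 0 i.
  have := psdA (adjmx U *m delta_mx i 0).
  rewrite -mulmxA -/(dot _ _) eA -!mulmxA dot_adjl adjmxK !(mulmxA U) UU !mul1mx.
  by rewrite dot_delta -colE !mxE eqxx mulr1n.
split.
  rewrite !adjmx_mul adjmxK adjmx_diag ?mulmxA // => i.
  by rewrite mxE sqrtC_real.
rewrite eA -!mulmxA; congr (_ *m _).
rewrite (mulmxA U) UU mul1mx !mulmxA mulmx_diag.
by congr (diag_mx _ *m _); apply/rowP=> i; rewrite !mxE -expr2 sqrtCK.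
Qed.

Definition sqrtmx n (A : 'M[C]_n) : 'M[C]_n :=
  adjmx (spectralmx A) *m diag_mx (\row_i sqrtC (spectral_diag A 0 i)) *m spectralmx A.

Lemma psd_sqrt n (A : 'M[C]_n) : psdmx A ->
  adjmx (sqrtmx A) = sqrtmx A /\ sqrtmx A *m sqrtmx A = A.
Proof.
move=> psdA; have adjA := psd_herm psdA.
have adj_tc M : adjmx M = map_mx Num.conj M^T :> 'M[C]_n.
  by apply/matrixP=> i j; rewrite !mxE.
have herm : A \is hermsymmx.
  by apply/is_hermitianmxP; rewrite expr0 scale1r -adj_tc adjA.
have /orthomx_spectralP eA := hermitian_normalmx herm.
have Uun := spectral_unitarymx A.
have UU : spectralmx A *m adjmx (spectralmx A) = 1%:M.
  by rewrite adj_tc; apply/unitarymxP.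
rewrite invmx_unitary // -adj_tc in eA.
exact: (unitary_diag_sqrt UU eA psdA).
Qed.

End PositiveSquareRoot.

Section BB84Overlaps.
Variable R : realType.
Local Notation C := R[i].
Local Notation s2 := ((Num.sqrt (2 : R))^-1).

Lemma conjC_realC (x : R) : (x%:C%C : C)^* = x%:C%C.
Proof. by apply: conj_Creal; apply/complex_realP; exists x. Qed.

Lemma normC_realC (x : R) : `|(x%:C)%C : C| = (`|x|)%:C%C.
Proof. by rewrite normc_def /= expr0n /= addr0 sqrtr_sqr. Qed.

Definition had_re (t a b : bool) : R :=
  if t then s2 * (-1) ^+ (a && b) else (a == b)%:R.

Lemma had_ampE t a b : had_amp R t a b = (had_re t a b)%:C%C.
Proof.
rewrite /had_amp /had_re; case: t; last by rewrite rmorph_nat.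
by rewrite rmorphM rmorphXn rmorphN1.
Qed.

Lemma had_re_sym t a b : had_re t a b = had_re t b a.
Proof. by rewrite /had_re andbC eq_sym. Qed.

(* single-qubit overlap <a^t | a'^t'> *)
Definition qubit_overlap (t t' a a' : bool) : R :=
  if t == t' then (a == a')%:R else s2 * (-1) ^+ (a && a').

Lemma s2_sqr : s2 * s2 = 2^-1.
Proof. by rewrite -invfM -expr2 sqr_sqrtr // ler0n. Qed.

Lemma qubit_overlapE t t' a a' :
  \sum_(b : bool) had_re t a b * had_re t' a' b = qubit_overlap t t' a a'.
Proof.
rewrite big_bool /had_re /qubit_overlap.
have h := s2_sqr.
case: t; case: t'; case: a; case: a' => /=; rewrite ?eqxx //=;
  rewrite ?expr1 ?expr0 ?mulr1 ?mulrN1 ?mulNr ?mulrN ?mul1r ?mulr0 ?mul0r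
          ?addr0 ?add0r ?opprK ?h ?subrr ?oppr0 ?add0r ?addNr //.
all: by rewrite [RHS](splitr 1) div1r.
Qed.

Lemma ketE lam (x th : bits lam) k j :
  bb84_ket x th k j = (\prod_i had_re (th i) (x i) (enum_val k i))%:C%C.
Proof. by rewrite mxE rmorph_prod; apply: eq_bigr => i _; exact: had_ampE. Qed.

Lemma ket_conj lam (x th : bits lam) k j :
  (bb84_ket x th k j)^* = bb84_ket x th k j :> C.
Proof. by rewrite ketE conjC_realC. Qed.

Lemma sum_bits_prod lam (F : 'I_lam -> bool -> R) :
  \sum_(y : bits lam) \prod_i F i (y i) = \prod_i \sum_(b : bool) F i b.
Proof. by rewrite bigA_distr_bigA. Qed.

Lemma sum_basis_prod lam (F : 'I_lam -> bool -> R) :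
  \sum_(k < qdim lam) \prod_i F i (enum_val k i) = \prod_i \sum_(b : bool) F i b.
Proof.
rewrite -sum_bits_prod /qdim.
rewrite -(big_enum_val (A := predT) (fun y : bits lam => \prod_i F i (y i))) /=.
by apply: eq_bigl.
Qed.

Lemma ket_dot lam (x th x' th' : bits lam) :
  dot (bb84_ket x th) (bb84_ket x' th') =
  (\prod_i qubit_overlap (th i) (th' i) (x i) (x' i))%:C%C.
Proof.
rewrite dotE (eq_bigr (fun k : 'I_(qdim lam) => (\prod_i (had_re (th i) (x i) (enum_val k i) *
    had_re (th' i) (x' i) (enum_val k i)))%:C%C)); last first.
  by move=> k _; rewrite !ketE conjC_realC -rmorphM -big_split.
rewrite -rmorph_sum (sum_basis_prod (fun i b =>
  had_re (th i) (x i) b * had_re (th' i) (x' i) b)); congr (_%:C%C).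
by apply: eq_bigr => i _; rewrite qubit_overlapE.
Qed.

Lemma prod_eq_bits lam (y y' : bits lam) :
  \prod_i ((y i == y' i)%:R : R) = (y == y')%:R.
Proof.
case: eqP => [->|neq]; first by rewrite big1 // => i _; rewrite eqxx.
have [i hi] : exists i, y i != y' i.
  apply/existsP; apply: contraT; rewrite negb_exists => /forallP H.
  by case: neq; apply/ffunP => i; apply/eqP; move: (H i); rewrite negbK.
by rewrite (bigD1 i) //= (negPf hi) mul0r.
Qed.

Lemma ket_dot_same lam (x x' th : bits lam) :
  dot (bb84_ket x th) (bb84_ket x' th) = (x == x')%:R :> C.
Proof.
rewrite ket_dot (eq_bigr (fun i => ((x i == x' i)%:R : R))); last first.
  by move=> i _; rewrite /qubit_overlap eqxx.
by rewrite prod_eq_bits rmorph_nat.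
Qed.

Lemma ket_complete lam (th : bits lam) :
  \sum_(x : bits lam) bb84_proj x th = 1%:M :> 'M[C]_(qdim lam).
Proof.
apply/matrixP=> k l; rewrite summxE !mxE.
rewrite (eq_bigr (fun x : bits lam => (\prod_i (had_re (th i) (enum_val k i) (x i) *
    had_re (th i) (enum_val l i) (x i)))%:C%C)); last first.
  move=> x _; rewrite mxE big_ord1 adjmxE !ketE conjC_realC -rmorphM -big_split /=.
  by congr (_%:C%C); apply: eq_bigr => i _; rewrite !(had_re_sym (th i) (x i)).
rewrite -rmorph_sum (sum_bits_prod (fun i b => had_re (th i) (enum_val k i) b *
  had_re (th i) (enum_val l i) b)) (eq_bigr (fun i => ((enum_val k i == enum_val l i)%:R : R))).
  by rewrite prod_eq_bits (inj_eq enum_val_inj) rmorph_nat.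
by move=> i _; rewrite qubit_overlapE /qubit_overlap eqxx.
Qed.

Definition overlap_bound1 (t t' : bool) : R := if t == t' then 1 else s2.

Definition kappa lam (th th' : bits lam) : R := \prod_i overlap_bound1 (th i) (th' i).

Lemma s2_ge0 : 0 <= s2.
Proof. by rewrite invr_ge0 sqrtr_ge0. Qed.

Lemma kappa_ge0 lam (th th' : bits lam) : 0 <= kappa th th'.
Proof.
by apply: prodr_ge0 => i _; rewrite /overlap_bound1; case: eqP; rewrite ?s2_ge0.
Qed.

Lemma kappa_sym lam (th th' : bits lam) : kappa th th' = kappa th' th.
Proof. by apply: eq_bigr => i _; rewrite /overlap_bound1 eq_sym. Qed.

Lemma ket_dot_le lam (x th x' th' : bits lam) :
  `|dot (bb84_ket x th) (bb84_ket x' th')| <= (kappa th th')%:C%C.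
Proof.
rewrite ket_dot normC_realC lecR normr_prod; apply: ler_prod => i _.
rewrite normr_ge0 /qubit_overlap /overlap_bound1 /=; case: (th i == th' i).
  by case: (x i == x' i); rewrite ?normr1 ?normr0 ?ler01.
by rewrite normrM normrX normrN1 expr1n mulr1 ger0_norm ?s2_ge0.
Qed.

Lemma ket_dot_real lam (x th x' th' : bits lam) :
  (dot (bb84_ket x th) (bb84_ket x' th') : C) \is Num.real.
Proof. by rewrite ket_dot; apply/complex_realP; eexists. Qed.

Lemma kappa_sum lam (th : bits lam) :
  \sum_(th' : bits lam) kappa th th' = (1 + s2) ^+ lam.
Proof.
rewrite /kappa (sum_bits_prod (fun i b => overlap_bound1 (th i) b)).
rewrite (eq_bigr (fun _ => 1 + s2)) ?prodr_const ?card_ord // => i _.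
by rewrite big_bool /overlap_bound1; case: (th i); rewrite //= addrC.
Qed.

(* each row and column of kappa sums to (1 + 1/sqrt 2)^lam *)
Lemma kappa_double_sum lam (a : bits lam -> C) :
  \sum_th \sum_th' (kappa th th')%:C%C * (a th + a th') =
  2 * (((1 + s2) ^+ lam)%:C%C * \sum_th a th).
Proof.
have row_sum (th : bits lam) : \sum_th' (kappa th th')%:C%C = ((1 + s2) ^+ lam)%:C%C :> C.
  by rewrite -rmorph_sum kappa_sum.
rewrite (eq_bigr (fun th => \sum_th' (kappa th th')%:C%C * a th +
                            \sum_th' (kappa th th')%:C%C * a th')); last first.
  by move=> th _; rewrite -big_split; apply: eq_bigr => th' _; rewrite mulrDr.
rewrite big_split /= mulr_natl mulr2n; congr (_ + _).
  by rewrite mulr_sumr; apply: eq_bigr => th _; rewrite -mulr_suml row_sum.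
rewrite exchange_big mulr_sumr; apply: eq_bigr => th' _.
rewrite -mulr_suml -(row_sum th'); congr (_ * _).
by apply: eq_bigr => th _; rewrite kappa_sym.
Qed.

End BB84Overlaps.

Arguments kappa {R lam}.

(* For a basis
   th, the operator opBC th = sum_x |x^th><x^th| ⊗ G th x ⊗ K th x factors as
   opB th * opC th with opB, opC contractions; for two bases the cross term
   <opBC th a, opBC th' b> = <opB th a, (opC th * opB th') opC th' b> has a
   middle factor controlled by the overlaps, hence by kappa th th'. *)
Section Monogamy.
Variable R : realType.
Local Notation C := R[i].
Local Notation s2 := ((Num.sqrt (2 : R))^-1).
Variables (lam dB dC : nat).
Variable G : bits lam -> bits lam -> 'M[C]_dB.
Variable K : bits lam -> bits lam -> 'M[C]_dC.
Hypothesis G_adj : forall th x, adjmx (G th x) = G th x.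
Hypothesis K_adj : forall th x, adjmx (K th x) = K th x.
Hypothesis G_sum : forall th, \sum_x G th x *m G th x = 1%:M.
Hypothesis K_sum : forall th, \sum_x K th x *m K th x = 1%:M.

Local Notation N := (qdim lam).
Local Notation ket th x := (@bb84_ket R lam x th).
Local Notation rho th x := (@bb84_proj R lam x th).
Local Notation I_B := (1%:M : 'M[C]_dB).
Local Notation I_C := (1%:M : 'M[C]_dC).
Local Notation cV := 'cV[C]_(N * (dB * dC)).

Lemma rho_adj th x : adjmx (rho th x) = rho th x.
Proof. by rewrite /bb84_proj adjmx_mul adjmxK. Qed.

Lemma rho_mul_same th x x' : rho th x *m rho th x' = (x == x')%:R *: rho th x.
Proof.
rewrite /bb84_proj outer_mul ket_dot_same.
by case: eqP => [->|_]; rewrite ?scale1r ?scale0r.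
Qed.

Lemma rho_gram th x : adjmx (rho th x) *m rho th x = rho th x.
Proof. by rewrite rho_adj rho_mul_same eqxx scale1r. Qed.

Lemma tens_orth th x x' (A B : 'M[C]_(dB * dC)) : x != x' ->
  (rho th x *t A) *m (rho th x' *t B) = 0.
Proof. by move=> nx; rewrite tensmx_mul rho_mul_same (negPf nx) scale0r tens0mx. Qed.

Lemma resolution_B th th' :
  \sum_x \sum_y rho th x *t ((G th' y *m G th' y) *t I_C) = 1%:M.
Proof.
rewrite -(@tensmx11 R N) -(@tensmx11 R dB) -(ket_complete R th) -(G_sum th') tensmx_suml.
by apply: eq_bigr => x _; rewrite tensmx_suml tensmx_sumr.
Qed.

Lemma resolution_C th th' :
  \sum_x \sum_y rho th x *t (I_B *t (K th' y *m K th' y)) = 1%:M.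
Proof.
rewrite -(@tensmx11 R N) -(@tensmx11 R dB) -(ket_complete R th) -(K_sum th') tensmx_suml.
by apply: eq_bigr => x _; rewrite !tensmx_sumr.
Qed.

Definition PiBC th x := rho th x *t (G th x *t K th x).
Definition opB th := \sum_x rho th x *t (G th x *t I_C).
Definition opC th := \sum_x rho th x *t (I_B *t K th x).
Definition opBC th := \sum_x PiBC th x.

Lemma PiBC_adj th x : adjmx (PiBC th x) = PiBC th x.
Proof. by rewrite /PiBC !adjmx_tens rho_adj G_adj K_adj. Qed.

Lemma opBC_adj th : adjmx (opBC th) = opBC th.
Proof. by rewrite /opBC adjmx_sum; apply: eq_bigr => x _; apply: PiBC_adj. Qed.

Lemma opB_adj th : adjmx (opB th) = opB th.
Proof.
rewrite /opB adjmx_sum; apply: eq_bigr => x _.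
by rewrite !adjmx_tens rho_adj G_adj adjmx1.
Qed.

(* the rho th x are orthogonal projections, so opBC th factors *)
Lemma opBC_factor th : opBC th = opB th *m opC th.
Proof.
rewrite /opB /opC mulmx_suml; apply: eq_bigr => x _.
rewrite mulmx_sumr (bigD1 x) //= big1 ?addr0 => [|y yx].
  by rewrite /PiBC !tensmx_mul mulmx1 mul1mx rho_mul_same eqxx scale1r.
by apply: tens_orth; rewrite eq_sym.
Qed.

Lemma sqnorm_opBC th (v : cV) :
  sqnorm (opBC th *m v) = \sum_x sqnorm (PiBC th x *m v).
Proof.
apply: sqnorm_sum_orth => [x|x y nxy]; first exact: PiBC_adj.
exact: tens_orth.
Qed.

Lemma opB_contraction th (a : cV) : sqnorm (opB th *m a) <= sqnorm a.
Proof.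
apply: (diag_contraction (F := fun x y => rho th x *t (G th y *t I_C))).
- rewrite -[RHS](resolution_B th th); apply: eq_bigr => x _; apply: eq_bigr => y _.
  by rewrite !adjmx_tens_mul rho_gram G_adj adjmx1 mulmx1.
- by move=> x; rewrite !adjmx_tens rho_adj G_adj adjmx1.
- by move=> x y; apply: tens_orth.
Qed.

Lemma opC_contraction th (a : cV) : sqnorm (opC th *m a) <= sqnorm a.
Proof.
apply: (diag_contraction (F := fun x y => rho th x *t (I_B *t K th y))).
- rewrite -[RHS](resolution_C th th); apply: eq_bigr => x _; apply: eq_bigr => y _.
  by rewrite !adjmx_tens_mul rho_gram K_adj adjmx1 mulmx1.
- by move=> x; rewrite !adjmx_tens rho_adj K_adj adjmx1.
- by move=> x y; apply: tens_orth.
Qed.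

(* the rank-one pieces of the middle operator opC th *m opB th' *)
Definition mid_left th th' x x' := ket th x *t (G th' x' *t I_C).
Definition mid_right th th' x x' := adjmx (ket th' x') *t (I_B *t K th x).

Lemma opCB_expand th th' :
  opC th *m opB th' = \sum_x \sum_x'
    dot (ket th x) (ket th' x') *: (mid_left th th' x x' *m mid_right th th' x x').
Proof.
rewrite /opC /opB mulmx_suml; apply: eq_bigr => x _.
rewrite mulmx_sumr; apply: eq_bigr => x' _.
by rewrite /mid_left /mid_right !tensmx_mul !mulmx1 !mul1mx /bb84_proj outer_mul tensmxZl.
Qed.

Lemma re2dot_mid th th' (u v : cV) :
  re2dot u ((opC th *m opB th') *m v) = \sum_x \sum_x'
    dot (ket th x) (ket th' x') *
      re2dot (adjmx (mid_left th th' x x') *m u) (mid_right th th' x x' *m v).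
Proof.
have E : dot u ((opC th *m opB th') *m v) = \sum_x \sum_x'
    dot (ket th x) (ket th' x') *
      dot (adjmx (mid_left th th' x x') *m u) (mid_right th th' x x' *m v).
  rewrite opCB_expand mulmx_suml dot_sumr; apply: eq_bigr => x _.
  rewrite mulmx_suml dot_sumr; apply: eq_bigr => x' _.
  by rewrite -scalemxAl dotZr -mulmxA dot_adjl.
rewrite /re2dot E rmorph_sum -big_split; apply: eq_bigr => x _.
rewrite rmorph_sum -big_split; apply: eq_bigr => x' _.
by rewrite rmorphM /= (conj_Creal (ket_dot_real R _ _ _ _)) mulrDr.
Qed.

Lemma mid_left_resolution th th' (u : cV) :
  sqnorm u = \sum_x \sum_x' sqnorm (adjmx (mid_left th th' x x') *m u).
Proof.
apply: sqnorm_resolution; rewrite -[RHS](resolution_B th th').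
apply: eq_bigr => x _; apply: eq_bigr => x' _.
by rewrite adjmxK /mid_left !adjmx_tens !tensmx_mul G_adj adjmx1 mulmx1.
Qed.

Lemma mid_right_resolution th th' (v : cV) :
  sqnorm v = \sum_x \sum_x' sqnorm (mid_right th th' x x' *m v).
Proof.
rewrite exchange_big /=; apply: sqnorm_resolution.
rewrite -[RHS](resolution_C th' th); apply: eq_bigr => x' _; apply: eq_bigr => x _.
by rewrite /mid_right !adjmx_tens !tensmx_mul adjmxK K_adj adjmx1 mulmx1.
Qed.

Lemma mid_bound th th' (u v : cV) :
  re2dot u ((opC th *m opB th') *m v) <= (kappa th th')%:C%C * (sqnorm u + sqnorm v).
Proof.
rewrite re2dot_mid (mid_left_resolution th th' u) (mid_right_resolution th th' v).
rewrite -big_split mulr_sumr; apply: ler_sum => x _.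
rewrite -big_split mulr_sumr; apply: ler_sum => x' _.
apply: le_trans (real_ler_norm (rpredM (ket_dot_real R _ _ _ _) (re2dot_real _ _))) _.
by rewrite normrM ler_pM ?normr_ge0 ?ket_dot_le ?norm_re2dot_le.
Qed.

Lemma cross_bound th th' (a b : cV) :
  re2dot (opBC th *m a) (opBC th' *m b) <= (kappa th th')%:C%C * (sqnorm a + sqnorm b).
Proof.
have E : dot (opBC th *m a) (opBC th' *m b) =
    dot (opB th *m a) ((opC th *m opB th') *m (opC th' *m b)).
  rewrite -{1}(opBC_adj th) -dot_adjl -{1}(opB_adj th) -dot_adjl.
  by rewrite (opBC_factor th) (opBC_factor th') !mulmxA.
rewrite /re2dot E; apply: le_trans (mid_bound th th' _ _) _.
by rewrite ler_wpM2l ?lecR ?kappa_ge0 // lerD ?opB_contraction ?opC_contraction.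
Qed.

Lemma sqnorm_sum_opBC (z : bits lam -> cV) :
  sqnorm (\sum_th opBC th *m z th) <=
  ((1 + s2) ^+ lam)%:C%C * \sum_th sqnorm (z th).
Proof.
rewrite -(ler_pM2l (ltr0n _ 2)) sqnorm_sum -kappa_double_sum.
by apply: ler_sum => th _; apply: ler_sum => th' _; apply: cross_bound.
Qed.

Lemma opBC_sum_bound (v : cV) :
  \sum_th sqnorm (opBC th *m v) <= ((1 + s2) ^+ lam)%:C%C * sqnorm v.
Proof.
set w := \sum_th opBC th *m (opBC th *m v).
have dot_wv : dot w v = \sum_th sqnorm (opBC th *m v).
  by rewrite /w dot_suml; apply: eq_bigr => th _; rewrite -{1}(opBC_adj th) -dot_adjl.
rewrite -dot_wv; apply: dot_le_sqnorm.
- by rewrite ltcR exprn_gt0 // ltr_pwDl ?ltr01 ?s2_ge0.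
- by rewrite dot_wv rpred_sum // => th _; apply: sqnorm_real.
- by rewrite dot_wv; apply: sqnorm_sum_opBC.
Qed.

End Monogamy.

Section Choi.
Variable R : realType.
Local Notation C := R[i].
Variables (n m : nat).
Variable Phi : 'M[C]_n -> 'M[C]_m.

Definition choi : 'M[C]_(n * m) :=
  \sum_(i < n) \sum_(j < n) (delta_mx i j *t Phi (delta_mx i j)).

Lemma trace_delta p (i j : 'I_p) (A : 'M[C]_p) : \tr (delta_mx i j *m A) = A j i.
Proof.
rewrite /mxtrace (bigD1 i) //= big1 ?addr0 => [|k ki]; rewrite mxE.
  rewrite (bigD1 j) //= big1 ?addr0 => [|l lj]; rewrite !mxE.
    by rewrite !eqxx mul1r.
  by rewrite (negPf lj) andbF mul0r.
by rewrite big1 // => l _; rewrite mxE (negPf ki) mul0r.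
Qed.

Lemma trace_delta1 p (i j : 'I_p) : \tr (delta_mx i j : 'M[C]_p) = (i == j)%:R.
Proof. by rewrite -[delta_mx i j]mulmx1 trace_delta mxE eq_sym. Qed.

Section Linear.
Hypothesis Phi_lin : linear_map Phi.

Lemma Phi0 : Phi 0 = 0.
Proof.
have := Phi_lin 1 0 0; rewrite !scale1r addr0 => h.
by apply: (addrI (Phi 0)); rewrite addr0 -h.
Qed.

Lemma Phi_sum (I : finType) (F : I -> 'M[C]_n) : Phi (\sum_i F i) = \sum_i Phi (F i).
Proof.
apply: (big_morph Phi _ Phi0) => A B.
by have := Phi_lin 1 A B; rewrite !scale1r.
Qed.

Lemma Phi_expand X : Phi X = \sum_i \sum_j X i j *: Phi (delta_mx i j).
Proof.
rewrite {1}(matrix_sum_delta X) Phi_sum; apply: eq_bigr => i _.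
rewrite Phi_sum; apply: eq_bigr => j _.
by have := Phi_lin (X i j) (delta_mx i j) 0; rewrite !addr0 Phi0 addr0.
Qed.

Lemma trace_choi (X : 'M[C]_n) (Y : 'M[C]_m) :
  \tr (Y *m Phi X) = \tr (choi *m (X^T *t Y)).
Proof.
rewrite Phi_expand /choi mulmx_sumr mulmx_suml !raddf_sum /=; apply: eq_bigr => i _.
rewrite mulmx_sumr mulmx_suml !raddf_sum /=; apply: eq_bigr => j _.
rewrite -scalemxAr mxtraceZ tensmx_mul mxtrace_tens trace_delta mxE.
by rewrite mxtrace_mulC.
Qed.

End Linear.

Lemma trace_choi_tp : trace_preserving Phi -> \tr choi = n%:R.
Proof.
move=> Phi_tp; rewrite /choi raddf_sum /= (eq_bigr (fun _ => (1 : C))).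
  by rewrite sumr_const card_ord.
move=> i _; rewrite raddf_sum /= (bigD1 i) //= big1 ?addr0 => [|j ji].
  by rewrite mxtrace_tens Phi_tp !trace_delta1 eqxx mul1r.
by rewrite mxtrace_tens trace_delta1 eq_sym (negPf ji) mul0r.
Qed.

(* the unnormalised maximally entangled vector sum_i |i>|i> *)
Definition max_ent : 'cV[C]_(n * n) :=
  \col_r (((mxtens_unindex r).1 == (mxtens_unindex r).2)%:R).

Lemma max_ent_psd : psdmx (max_ent *m adjmx max_ent).
Proof.
move=> v; rewrite -mulmxA -/(dot _ _) -mulmxA adj_mul_vec mul_mx_scalar dotZr dotC.
by rewrite mulrC mul_conjC_ge0.
Qed.

Lemma choi_ampl : ampl Phi (max_ent *m adjmx max_ent) = choi.
Proof.
rewrite /ampl /choi; apply: eq_bigr => i _; apply: eq_bigr => j _.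
congr (_ *t Phi _); apply/matrixP => a b.
rewrite !mxE big_ord1 !mxE !mxtens_indexK /= conjC_nat -natrM mulnb.
by rewrite [a == i]eq_sym [b == j]eq_sym.
Qed.

Lemma choi_psd : completely_positive Phi -> psdmx choi.
Proof. by move=> Phi_cp; rewrite -choi_ampl; apply/Phi_cp/max_ent_psd. Qed.

End Choi.

Lemma prob_le_min_entropy (R : realType) (T : finType) (p : T -> R) (h : R) :
  is_distr p -> h <= Hmin p -> forall t, p t <= 2 `^ (- h).
Proof.
move=> [p0 p1] hH t.
set pm := \big[Num.max/0]_(t : T) p t.
have pt_le u : p u <= pm by apply: le_bigmax.
have pm_gt0 : 0 < pm.
  rewrite ltNge; apply/negP => pm_le0.
  have : 1 <= pm *+ #|T| by rewrite -p1 -sumr_const; apply: ler_sum => u _.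
  by rewrite -mulr_natr; move/le_trans/(_ (mulr_le0_ge0 pm_le0 (ler0n _ _))); rewrite ler10.
have ln2 : 0 < ln (2 : R) by apply: ln_gt0; rewrite ltr1n.
apply: (le_trans (pt_le t)).
rewrite /powR pnatr_eq0 /= -{1}(lnK pm_gt0) ler_expR.
move: hH; rewrite /Hmin /log2 -/pm lerNr => hH.
by rewrite -(divfK (lt0r_neq0 ln2) (ln pm)) ler_wpM2r // ltW.
Qed.

Section GuessingGame.
Variable R : realType.
Local Notation C := R[i].
Local Notation s2 := ((Num.sqrt (2 : R))^-1).
Variables (lam dB dC : nat).
Variable B : bits lam -> bits lam -> 'M[C]_dB.
Variable Cm : bits lam -> bits lam -> 'M[C]_dC.
Variable Phi : 'M[C]_(qdim lam) -> 'M[C]_(dB * dC).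
Hypothesis B_povm : forall th, povm (B th).
Hypothesis C_povm : forall th, povm (Cm th).
Hypothesis Phi_cptp : cptp Phi.

Local Notation N := (qdim lam).

Definition rootB th x := sqrtmx (B th x).
Definition rootC th x := sqrtmx (Cm th x).
Definition rootJ := sqrtmx (choi Phi).

Lemma rootB_adj th x : adjmx (rootB th x) = rootB th x.
Proof. exact: (psd_sqrt ((B_povm th).1 x)).1. Qed.

Lemma rootC_adj th x : adjmx (rootC th x) = rootC th x.
Proof. exact: (psd_sqrt ((C_povm th).1 x)).1. Qed.

Lemma rootB_sq th x : rootB th x *m rootB th x = B th x.
Proof. exact: (psd_sqrt ((B_povm th).1 x)).2. Qed.

Lemma rootC_sq th x : rootC th x *m rootC th x = Cm th x.
Proof. exact: (psd_sqrt ((C_povm th).1 x)).2. Qed.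

Lemma rootB_sum th : \sum_x rootB th x *m rootB th x = 1%:M.
Proof. by rewrite -(B_povm th).2; apply: eq_bigr => x _; apply: rootB_sq. Qed.

Lemma rootC_sum th : \sum_x rootC th x *m rootC th x = 1%:M.
Proof. by rewrite -(C_povm th).2; apply: eq_bigr => x _; apply: rootC_sq. Qed.

Lemma rootJ_adj : adjmx rootJ = rootJ.
Proof. by case: Phi_cptp => _ Phi_cp _; exact: (psd_sqrt (choi_psd Phi_cp)).1. Qed.

Lemma rootJ_sq : rootJ *m rootJ = choi Phi.
Proof. by case: Phi_cptp => _ Phi_cp _; exact: (psd_sqrt (choi_psd Phi_cp)).2. Qed.

Lemma trace_sandwich n (L Z : 'M[C]_n) : adjmx L = L ->
  \tr (L *m Z *m L) = \sum_j dot (col j L) (Z *m col j L).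
Proof.
move=> L_adj; rewrite /mxtrace; apply: eq_bigr => j _.
rewrite dotE -mulmxA mxE; apply: eq_bigr => k _.
rewrite !mxE -adjmxE L_adj; congr (_ * _).
by apply: eq_bigr => l _; rewrite mxE.
Qed.

Lemma bb84_proj_tr (x th : bits lam) : (bb84_proj x th)^T = bb84_proj x th :> 'M[C]_N.
Proof.
apply/matrixP=> a b; rewrite mxE /bb84_proj !mxE !big_ord1 !adjmxE !ket_conj.
by rewrite mulrC.
Qed.

Lemma success_as_sqnorms th x :
  \tr ((B th x *t Cm th x) *m Phi (bb84_proj x th)) =
  \sum_j sqnorm (PiBC rootB rootC th x *m col j rootJ).
Proof.
case: Phi_cptp => Phi_lin _ _.
rewrite (trace_choi Phi_lin) bb84_proj_tr -rootJ_sq -mulmxA mxtrace_mulC.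
rewrite trace_sandwich ?rootJ_adj //; apply: eq_bigr => j _.
rewrite sqnorm_adj (PiBC_adj rootB_adj rootC_adj) /PiBC !tensmx_mul.
by rewrite (rho_mul_same R) eqxx scale1r rootB_sq rootC_sq.
Qed.

Lemma success_ge0 th x : 0 <= \tr ((B th x *t Cm th x) *m Phi (bb84_proj x th)).
Proof. by rewrite success_as_sqnorms sumr_ge0 // => j _; apply: sqnorm_ge0. Qed.

Lemma sqnorm_cols_rootJ : \sum_j sqnorm (col j rootJ) = N%:R.
Proof.
case: Phi_cptp => _ _ Phi_tp; rewrite -(trace_choi_tp Phi_tp) -rootJ_sq.
have := trace_sandwich 1%:M rootJ_adj; rewrite mulmx1 => ->.
by apply: eq_bigr => j _; rewrite mul1mx.
Qed.

Lemma success_sum_le :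
  \sum_x \sum_th \tr ((B th x *t Cm th x) *m Phi (bb84_proj x th)) <=
  ((1 + s2) ^+ lam)%:C%C * N%:R.
Proof.
rewrite -sqnorm_cols_rootJ mulr_sumr exchange_big /=.
under eq_bigr => th _ do under eq_bigr => x _ do rewrite success_as_sqnorms.
under eq_bigr => th _ do rewrite exchange_big /=.
rewrite exchange_big /=; apply: ler_sum => j _.
under eq_bigr => th _ do rewrite -(sqnorm_opBC rootB_adj rootC_adj).
exact: (opBC_sum_bound rootB_adj rootC_adj rootB_sum rootC_sum).
Qed.

End GuessingGame.

Theorem mainTheorem1 (R : realType) (lam : nat) (p : bits lam -> R) (h : R)
  (dB dC : nat)
  (B : bits lam -> bits lam -> 'M[R[i]]_dB)
  (Cm : bits lam -> bits lam -> 'M[R[i]]_dC)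
  (Phi : 'M[R[i]]_(qdim lam) -> 'M[R[i]]_(dB * dC)) :
  is_distr p -> h <= Hmin p ->
  (forall theta, povm (B theta)) ->
  (forall theta, povm (Cm theta)) ->
  cptp Phi ->
  \sum_(x : bits lam)
     (p x)%:C%C *
       ((#|{: bits lam}|%:R)^-1 *
        \sum_(theta : bits lam)
          \tr ((B theta x *t Cm theta x) *m Phi (bb84_proj x theta)))
  <= ((2 `^ (- h)) * (1 + (Num.sqrt (2 : R))^-1) ^+ lam)%:C%C.
Proof.
move=> p_distr p_Hmin B_povm C_povm Phi_cptp.
set N : R[i] := #|{: bits lam}|%:R.
have N_gt0 : 0 < N by rewrite ltr0n; apply/card_gt0P; exists [ffun=> false].
apply: le_trans (_ : \sum_x (2 `^ (- h))%:C%C * (N^-1 *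
    \sum_theta \tr ((B theta x *t Cm theta x) *m Phi (bb84_proj x theta))) <= _).
  apply: ler_sum => x _; rewrite ler_wpM2r ?lecR ?(prob_le_min_entropy p_distr) //.
  apply: mulr_ge0; first by rewrite invr_ge0 ltW.
  by apply: sumr_ge0 => th _; exact: (success_ge0 B_povm C_povm Phi_cptp).
rewrite -!mulr_sumr rmorphM /= ler_wpM2l ?lecR ?powR_ge0 //.
rewrite ler_pdivrMl // mulrC.
exact: (success_sum_le B_povm C_povm Phi_cptp).
Qed.
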